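(* Let $k\ge 4$ be an integer and let $C$ be a circular ordering of the vertex set of the path $P_k$. Then $(P_k,C)$ is $LF$-free if and only if it is a $k$-zigzag.
   Context: A circular ordering of a finite set is obtained by placing its elements at distinct points of a circle. A circularly ordered graph is a graph with a circular ordering of its vertices; isomorphism means a graph isomorphism preserving circular orderings; induced circularly ordered subgraphs are induced subgraphs with the restricted ordering. $LF$ consists of the following circularly ordered graphs (vertices $v_1,v_2,\dots$ clockwise in this order; listed edges are all edges): the triangle on $v_1,v_2,v_3$; on $v_1,\dots,v_4$: edges $v_1v_2,v_2v_3,v_3v_4,v_4v_1$; edges $v_1v_2,v_2v_4,v_4v_3,v_3v_1$; edges $v_1v_2,v_2v_3,v_3v_4$; edges $v_3v_1,v_1v_4,v_4v_2$; edges $v_3v_1,v_3v_2,v_3v_4$. $(P_k,C)$ is $LF$-free if it has no induced circularly ordered subgraph isomorphic to a member of $LF$. Let $Z$ be the circularly ordered graph on $v_1,\dots,v_4$ (clockwise) with edges $v_1v_2,v_2v_4,v_4v_3$, and $Z^\ast$ the one with edges $v_2v_1,v_1v_3,v_3v_4$. A $k$-zigzag is a circular ordering of $P_k$ in which every induced subgraph isomorphic to $P_4$ (with the restricted circular ordering) is isomorphic to $Z$ or $Z^\ast$. *)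

From mathcomp Require Import all_boot perm.
Set Implicit Arguments. Unset Strict Implicit. Unset Printing Implicit Defensive.

Definition pathadj (k : nat) : rel 'I_k :=
  fun i j => (i.+1 == j :> nat) || (j.+1 == i :> nat).

(* A circular ordering of the vertices of P_k: C v is the position of vertex v
   among k points of a circle, numbered 0..k-1 clockwise. *)
Definition circ_ordering (k : nat) := {perm 'I_k}.

(* A list of distinct positions is in clockwise order iff some rotation of it is
   strictly increasing. *)
Definition cyc_ordered (s : seq nat) : Prop := exists r, sorted ltn (rot r s).

(* A small circularly ordered graph on v_1,...,v_m (clockwise, v_{i+1} is the
   vertex i : 'I_m), given by its edge list with 1-based labels. *)
Definition mkgraph (m : nat) (E : seq (nat * nat)) : rel 'I_m :=
  fun i j => ((i.+1, j.+1) \in E) || ((j.+1, i.+1) \in E).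

Definition copy_on (k : nat) (C : circ_ordering k) (S : {set 'I_k})
    (m : nat) (H : rel 'I_m) : Prop :=
  exists u : 'I_m -> 'I_k,
    [/\ S = [set u i | i : 'I_m],
        cyc_ordered [seq (C (u i) : nat) | i <- enum 'I_m]
      & forall i j, pathadj (u i) (u j) = H i j].

Definition has_copy (k : nat) (C : circ_ordering k) (m : nat) (H : rel 'I_m) : Prop :=
  exists S, copy_on C S H.

Definition LF1 : rel 'I_3 := mkgraph [:: (1,2); (2,3); (1,3)].
Definition LF2 : rel 'I_4 := mkgraph [:: (1,2); (2,3); (3,4); (4,1)].
Definition LF3 : rel 'I_4 := mkgraph [:: (1,2); (2,4); (4,3); (3,1)].
Definition LF4 : rel 'I_4 := mkgraph [:: (1,2); (2,3); (3,4)].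
Definition LF5 : rel 'I_4 := mkgraph [:: (3,1); (1,4); (4,2)].
Definition LF6 : rel 'I_4 := mkgraph [:: (3,1); (3,2); (3,4)].

Definition LF_free (k : nat) (C : circ_ordering k) : Prop :=
  ~ has_copy C LF1 /\ ~ has_copy C LF2 /\ ~ has_copy C LF3 /\
  ~ has_copy C LF4 /\ ~ has_copy C LF5 /\ ~ has_copy C LF6.

Definition Zg : rel 'I_4 := mkgraph [:: (1,2); (2,4); (4,3)].
Definition Zstar : rel 'I_4 := mkgraph [:: (2,1); (1,3); (3,4)].
Definition P4 : rel 'I_4 := mkgraph [:: (1,2); (2,3); (3,4)].

Definition induces_P4 (k : nat) (S : {set 'I_k}) : Prop :=
  exists u : 'I_4 -> 'I_k,
    [/\ injective u, S = [set u i | i : 'I_4]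
      & forall i j, pathadj (u i) (u j) = P4 i j].

Definition zigzag (k : nat) (C : circ_ordering k) : Prop :=
  forall S : {set 'I_k}, induces_P4 S -> copy_on C S Zg \/ copy_on C S Zstar.

From mathcomp Require Import all_boot perm zify.

Set Implicit Arguments.
Unset Strict Implicit.
Unset Printing Implicit Defensive.

(* A circularly ordered P4 is determined by the cyclic order of the positions
   of its vertices read along the path, up to reversing the path, which is the
   only nontrivial automorphism of P4.  The six cyclic orders of four points
   thus give exactly four circularly ordered P4s: LF4 (the path runs around the
   circle), LF5, Z and Z*.  The other members of LF (a triangle, two 4-cycles
   and a claw) are not induced subgraphs of a path at all, and every copy of
   LF4 or LF5 in (P_k, C) spans an induced P4.  Hence (P_k, C) is LF-free
   exactly when every induced P4 is a copy of Z or Z*. *)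

Definition cyc4 (a b c d : nat) : Prop :=
  (a < b /\ b < c /\ c < d) \/ (b < c /\ c < d /\ d < a) \/
  (c < d /\ d < a /\ a < b) \/ (d < a /\ a < b /\ b < c).

Lemma cyc_ordered4 a b c d : cyc_ordered [:: a; b; c; d] <-> cyc4 a b c d.
Proof.
rewrite /cyc4; split.
- by case=> -[|[|[|[|r]]]]; last rewrite rot_oversize //; rewrite /= => ?; lia.
- case=> [?|[?|[?|?]]]; [exists 0 | exists 1 | exists 2 | exists 3];
    rewrite /=; lia.
Qed.

(* The four groups are the circular types LF4, LF5, Z and Z* of the path
   a - b - c - d, each listed together with its reversal. *)
Lemma cyc4_path_types a b c d :
  a <> b -> a <> c -> a <> d -> b <> c -> b <> d -> c <> d ->
  (cyc4 a b c d \/ cyc4 d c b a) \/ (cyc4 b d a c \/ cyc4 c a d b) \/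
  (cyc4 a b d c \/ cyc4 d c a b) \/ (cyc4 b a c d \/ cyc4 c d b a).
Proof.
rewrite /cyc4 => *.
by case: (ltngtP b c) => ?; case: (ltngtP b d) => ?; case: (ltngtP c d) => ?;
  try lia; case: (ltngtP a b) => ?; case: (ltngtP a c) => ?;
  case: (ltngtP a d) => ?; lia.
Qed.

Lemma cyc_ordered_uniq s : cyc_ordered s -> uniq s.
Proof. by case=> r /(sorted_uniq ltn_trans ltnn); rewrite rot_uniq. Qed.

Lemma cyc_ordered_inj m (T : Type) (g : T -> nat) (f : 'I_m -> T) :
  cyc_ordered [seq g (f i) | i <- enum 'I_m] -> injective f.
Proof.
move/cyc_ordered_uniq/injectiveP => gf_inj i j e.
by apply: gf_inj => /=; rewrite e.
Qed.

Lemma imset_comp_inj (T U : finType) (f : T -> U) (s : T -> T) :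
  injective s -> [set f (s i) | i : T] = [set f i | i : T].
Proof.
move=> s_inj; apply/setP=> x; apply/imsetP/imsetP=> -[i _ ->].
  by exists (s i).
by exists (invF s_inj i); rewrite ?f_invF.
Qed.

Section PathGraph.

Variable k : nat.
Implicit Types x y z t a b c : 'I_k.

Lemma pathadj_triangle x y z :
  pathadj x y -> pathadj y z -> pathadj z x -> False.
Proof. rewrite /pathadj; lia. Qed.

Lemma pathadj_square x y z t : x != z -> y != t ->
  pathadj x y -> pathadj y z -> pathadj z t -> pathadj t x -> False.
Proof. rewrite -!val_eqE /pathadj /=; lia. Qed.

Lemma pathadj_claw x a b c : a != b -> a != c -> b != c ->
  pathadj x a -> pathadj x b -> pathadj x c -> False.
Proof. rewrite -!val_eqE /pathadj /=; lia. Qed.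

End PathGraph.

Lemma copy_on_induced k (C : circ_ordering k) S m (H : rel 'I_m) :
  copy_on C S H -> exists u : 'I_m -> 'I_k,
    [/\ injective u, S = [set u i | i : 'I_m]
      & forall i j, pathadj (u i) (u j) = H i j].
Proof.
case=> u [-> u_cyc u_adj]; exists u; split=> //.
exact: (cyc_ordered_inj (g := fun x => C x : nat) u_cyc).
Qed.

Lemma no_copy_LF1 k (C : circ_ordering k) : ~ has_copy C LF1.
Proof.
case=> S /copy_on_induced [u [_ _ u_adj]].
apply: (@pathadj_triangle _ (u (@Ordinal 3 0 isT)) (u (@Ordinal 3 1 isT))
  (u (@Ordinal 3 2 isT))); by rewrite u_adj.
Qed.

Local Notation o0 := (@Ordinal 4 0 isT).
Local Notation o1 := (@Ordinal 4 1 isT).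
Local Notation o2 := (@Ordinal 4 2 isT).
Local Notation o3 := (@Ordinal 4 3 isT).

Lemma no_copy_LF2 k (C : circ_ordering k) : ~ has_copy C LF2.
Proof.
case=> S /copy_on_induced [u [u_inj _ u_adj]].
apply: (@pathadj_square _ (u o0) (u o1) (u o2) (u o3));
  by rewrite ?u_adj ?(inj_eq u_inj).
Qed.

Lemma no_copy_LF3 k (C : circ_ordering k) : ~ has_copy C LF3.
Proof.
case=> S /copy_on_induced [u [u_inj _ u_adj]].
apply: (@pathadj_square _ (u o0) (u o1) (u o3) (u o2));
  by rewrite ?u_adj ?(inj_eq u_inj).
Qed.

Lemma no_copy_LF6 k (C : circ_ordering k) : ~ has_copy C LF6.
Proof.
case=> S /copy_on_induced [u [u_inj _ u_adj]].
apply: (@pathadj_claw _ (u o2) (u o0) (u o1) (u o3));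
  by rewrite ?u_adj ?(inj_eq u_inj).
Qed.

Lemma ord4_cases (i : 'I_4) : [\/ i = o0, i = o1, i = o2 | i = o3].
Proof.
case: i => -[|[|[|[|i]]]] lt_i4 //; [constructor 1 | constructor 2 |
  constructor 3 | constructor 4]; exact: val_inj.
Qed.

Ltac case4 i := case: (ord4_cases i) => ->.

Lemma map_enum4 (T : Type) (f : 'I_4 -> T) :
  [seq f i | i <- enum 'I_4] = [:: f o0; f o1; f o2; f o3].
Proof.
suff -> : enum 'I_4 = [:: o0; o1; o2; o3] by [].
by apply: (inj_map val_inj); rewrite val_enum_ord.
Qed.

(* Matching on [nat_of_ord] rather than [val] lets [simpl] evaluate [fun4] on
   the numerals [o0], ..., [o3]. *)
Definition fun4 (a b c d : 'I_4) (i : 'I_4) : 'I_4 :=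
  match nat_of_ord i with 0 => a | 1 => b | 2 => c | _ => d end.

Definition rev4 : 'I_4 -> 'I_4 := fun4 o3 o2 o1 o0.

Lemma P4_rev4 i j : P4 (rev4 i) (rev4 j) = P4 i j.
Proof. by case4 i; case4 j. Qed.

Lemma P4_automorphism (s : 'I_4 -> 'I_4) :
  (forall i j, P4 (s i) (s j) = P4 i j) -> s =1 id \/ s =1 rev4.
Proof.
move=> s_aut.
suff : [:: s o0; s o1; s o2; s o3] = [:: o0; o1; o2; o3] \/
       [:: s o0; s o1; s o2; s o3] = [:: o3; o2; o1; o0].
  by case=> -[? ? ? ?]; [left|right] => i; case4 i.
move: (s_aut o0 o1) (s_aut o0 o2) (s_aut o0 o3) (s_aut o1 o2) (s_aut o1 o3)
  (s_aut o2 o3).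
by case4 (s o0); case4 (s o1); case4 (s o2); case4 (s o3); auto.
Qed.

Definition iso_onto_P4 (H : rel 'I_4) (sigma : 'I_4 -> 'I_4) : Prop :=
  injective sigma /\ forall i j, P4 (sigma i) (sigma j) = H i j.

Lemma iso_onto_P4_cases H sigma s : iso_onto_P4 H sigma ->
  (forall i j, P4 (s i) (s j) = H i j) -> s =1 sigma \/ s =1 rev4 \o sigma.
Proof.
case=> sigma_inj sigma_iso s_iso.
case: (@P4_automorphism (s \o invF sigma_inj)) => [i j /= | e | e].
- by rewrite s_iso -sigma_iso !f_invF.
- by left=> i; have := e (sigma i); rewrite /= invF_f.
- by right=> i; have := e (sigma i); rewrite /= invF_f.
Qed.

Lemma iso_LF4 : iso_onto_P4 LF4 id.
Proof. by split=> // i j. Qed.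

Lemma iso_LF5 : iso_onto_P4 LF5 (fun4 o1 o3 o0 o2).
Proof. by split=> i j; case4 i; case4 j. Qed.

Lemma iso_Zg : iso_onto_P4 Zg (fun4 o0 o1 o3 o2).
Proof. by split=> i j; case4 i; case4 j. Qed.

Lemma iso_Zstar : iso_onto_P4 Zstar (fun4 o1 o0 o2 o3).
Proof. by split=> i j; case4 i; case4 j. Qed.

(* The path 0 - 1 - 2 - 3 with vertex i placed at position q i of the circle
   contains H as a spanning circularly ordered subgraph. *)
Definition P4_has_copy (q : 'I_4 -> nat) (H : rel 'I_4) : Prop :=
  exists s : 'I_4 -> 'I_4, (forall i j, P4 (s i) (s j) = H i j) /\
    cyc_ordered [seq q (s i) | i <- enum 'I_4].

Lemma P4_has_copyE q H sigma : iso_onto_P4 H sigma ->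
  P4_has_copy q H <-> cyc_ordered [seq q (sigma i) | i <- enum 'I_4] \/
                      cyc_ordered [seq q (rev4 (sigma i)) | i <- enum 'I_4].
Proof.
move=> iso; split=> [[s [s_iso s_cyc]] | [cyc|cyc]].
- case: (iso_onto_P4_cases iso s_iso) => e; rewrite map_enum4 !e in s_cyc;
    [left|right]; by rewrite map_enum4.
- by exists sigma; split; first exact: iso.2.
- by exists (rev4 \o sigma); split=> // i j; rewrite /= P4_rev4 iso.2.
Qed.

Lemma P4_zigzagP q : injective q ->
  P4_has_copy q Zg \/ P4_has_copy q Zstar <->
  ~ P4_has_copy q LF4 /\ ~ P4_has_copy q LF5.
Proof.
move=> q_inj; have q_neq i j : i != j -> q i <> q j by move=> /eqP ij /q_inj.
rewrite (P4_has_copyE _ iso_Zg) (P4_has_copyE _ iso_Zstar).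
rewrite (P4_has_copyE _ iso_LF4) (P4_has_copyE _ iso_LF5).
rewrite !map_enum4 /rev4 /fun4 /= !cyc_ordered4.
split; first by rewrite /cyc4; lia.
have := cyc4_path_types (q_neq o0 o1 isT) (q_neq o0 o2 isT) (q_neq o0 o3 isT)
  (q_neq o1 o2 isT) (q_neq o1 o3 isT) (q_neq o2 o3 isT).
tauto.
Qed.

Lemma positions_inj k (C : circ_ordering k) (w : 'I_4 -> 'I_k) :
  injective w -> injective (fun i => C (w i) : nat).
Proof. by move=> w_inj i j /val_inj/perm_inj/w_inj. Qed.

Lemma copy_on_P4P k (C : circ_ordering k) (w : 'I_4 -> 'I_k) H :
  (forall i j, pathadj (w i) (w j) = P4 i j) ->
  copy_on C [set w i | i : 'I_4] H <-> P4_has_copy (fun i => C (w i) : nat) H.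
Proof.
move=> w_adj; split=> [[v [Ev v_cyc v_adj]] | [s [s_adj s_cyc]]].
- have /fin_all_exists [s vE] j : exists i, v j = w i.
    have /imsetP[i _ ->] : v j \in [set w i | i : 'I_4] by rewrite Ev imset_f.
    by exists i.
  exists s; split; first by move=> i j; rewrite -w_adj -!vE v_adj.
  by move: v_cyc; rewrite !map_enum4 !vE.
- exists (w \o s); split=> //.
  + apply/esym/(imset_comp_inj w).
    exact: (cyc_ordered_inj (g := fun i => C (w i) : nat) s_cyc).
  + by move=> i j /=; rewrite w_adj s_adj.
Qed.

Lemma copy_induces_P4 k (C : circ_ordering k) S H sigma :
  iso_onto_P4 H sigma -> copy_on C S H -> induces_P4 S.
Proof.
case=> sigma_inj sigma_iso /copy_on_induced [v [v_inj -> v_adj]].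
have invF_inj := can_inj (f_invF sigma_inj).
exists (v \o invF sigma_inj); split.
- exact: inj_comp v_inj invF_inj.
- exact/esym/(imset_comp_inj v invF_inj).
- by move=> i j /=; rewrite v_adj -sigma_iso !f_invF.
Qed.

Lemma no_LF4_LF5_zigzag k (C : circ_ordering k) :
  ~ has_copy C LF4 -> ~ has_copy C LF5 -> zigzag C.
Proof.
move=> noLF4 noLF5 _ [w [w_inj -> w_adj]]; rewrite !(copy_on_P4P C _ w_adj).
apply/(P4_zigzagP (positions_inj (C := C) w_inj)).
by split=> cp; [apply: noLF4 | apply: noLF5]; exists [set w i | i : 'I_4];
  apply/(copy_on_P4P C _ w_adj).
Qed.

Lemma zigzag_copy_positions k (C : circ_ordering k) H sigma :
  zigzag C -> iso_onto_P4 H sigma -> has_copy C H ->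
  exists2 q : 'I_4 -> nat, injective q &
    P4_has_copy q H /\ (P4_has_copy q Zg \/ P4_has_copy q Zstar).
Proof.
move=> zz iso [S cp]; have S_P4 := copy_induces_P4 iso cp.
case: S_P4 (zz S S_P4) cp => w [w_inj -> w_adj].
rewrite !(copy_on_P4P C _ w_adj) => zzw cp.
by exists (fun i => C (w i) : nat); first exact: positions_inj.
Qed.

Lemma zigzag_no_LF4_LF5 k (C : circ_ordering k) :
  zigzag C -> ~ has_copy C LF4 /\ ~ has_copy C LF5.
Proof.
move=> zz; split=> [/(zigzag_copy_positions zz iso_LF4) |
  /(zigzag_copy_positions zz iso_LF5)] [q q_inj [cp /(P4_zigzagP q_inj)]];
  tauto.
Qed.

Theorem mainTheorem12 (k : nat) (hk : 4 <= k) (C : circ_ordering k) :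
  LF_free C <-> zigzag C.
Proof.
split=> [[_ [_ [_ [noLF4 [noLF5 _]]]]] | zz]; first exact: no_LF4_LF5_zigzag.
have [noLF4 noLF5] := zigzag_no_LF4_LF5 zz.
repeat split=> //; [exact: no_copy_LF1 | exact: no_copy_LF2 |
  exact: no_copy_LF3 | exact: no_copy_LF6].
Qed.
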